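(* Let $\Lambda$ be a finite, strongly connected $k$-graph with exactly one vertex, $y$ an $\mathbb{R}_+$-functor on $\Lambda$, and $\theta\in(0,\infty)$ such that condition (w-I) holds: $\rho(B_i(y,\theta))>1$ for all $1\le i\le k$. Then the function $w_{y,\theta}:F\mathcal{B}_\Lambda\to(0,\infty)$, $w_{y,\theta}(\lambda)=e^{-y(\lambda)}\big(\rho(B(y,\theta))^{-d(\lambda)}\big)^{1/\theta}$, is a weight on $\mathcal{B}_\Lambda$.
   Context: A $k$-graph is a countable small category $\Lambda$ with a degree functor $d:\Lambda\to\mathbb{N}^k$ satisfying unique factorization: if $d(\lambda)=m+n$ there are unique $\eta,\nu$ with $\lambda=\eta\nu$, $d(\eta)=m$, $d(\nu)=n$. $\Lambda^n=d^{-1}(n)$, $\Lambda^0$ = vertices, $r,s$ range/source; $e_i$ standard basis; finite: each $\Lambda^n$ finite; strongly connected: $v\Lambda w\ne\emptyset$ for all vertices (for finite $\Lambda$ this entails $\Lambda^{e_i}\ne\emptyset$ for all $i$). An $\mathbb{R}_+$-functor is $y:\Lambda\to[0,\infty)$ with $y(v)=0$ on vertices and $y(\lambda\nu)=y(\lambda)+y(\nu)$ when $s(\lambda)=r(\nu)$. With one vertex, $B_i(y,\theta)$ is the $1\times1$ matrix $\sum_{h\in\Lambda^{e_i}}e^{-\theta y(h)}=\rho(B_i(y,\theta))$; $\rho(B(y,\theta))^m=\prod_i\rho(B_i(y,\theta))^{m_i}$. A Bratteli diagram $\mathcal{B}$ has finite vertex sets $\mathcal{V}_n$ ($n\ge0$)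 and finite edge sets $\mathcal{E}_n$ ($n\ge1$), edges in $\mathcal{E}_n$ going from $\mathcal{V}_n$ to $\mathcal{V}_{n-1}$. A finite path of length $n$ is $f_1\cdots f_n$ with $f_j\in\mathcal{E}_j$, $s(f_j)=r(f_{j+1})$ (length-0 paths: vertices of $\mathcal{V}_0$); $F^n\mathcal{B}$ the set of these, $F\mathcal{B}=\bigcup_nF^n\mathcal{B}$. A weight on $\mathcal{B}$ is $w:F\mathcal{B}\to[0,\infty)$ with (i) $w(v)\le1$ for $v\in\mathcal{V}_0$; (ii) $\lim_n\sup\{w(\gamma):\gamma\in F^n\mathcal{B}\}=0$; (iii) $w(\gamma)\le w(\eta)$ whenever $\eta$ is an initial segment of $\gamma$. Stationary $k$-Bratteli diagram $\mathcal{B}_\Lambda$: $\mathcal{V}_n=\Lambda^0$; for $n\ge1$, $n\equiv i\pmod k$, $i\in\{1,\dots,k\}$, $\mathcal{E}_n$ has one edge from $q\in\mathcal{V}_n$ to $p\in\mathcal{V}_{n-1}$ for each $\lambda\in p\Lambda^{e_i}q$. A finite path $f_1\cdots f_n$ is identified with the morphism $f_1\cdots f_n\in\Lambda$, on which $y$ and $d$ are evaluated. *)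

From Stdlib Require Import Reals List Arith.
Import ListNotations.
Open Scope R_scope.

(* Standard basis of N^k, 0-based: [ebasis i] is e_{i+1} of the paper. *)
Definition ebasis (i : nat) : nat -> nat := fun j => if Nat.eqb j i then 1%nat else 0%nat.

(* A k-graph with exactly one vertex: a countable small category with one
   object (i.e. a monoid; the vertex is the identity morphism [kvtx]),
   a degree functor into N^k (encoded as nat -> nat vanishing at indices >= k),
   and unique factorisation. *)
Record KGraph1 (k : nat) : Type := {
  kmor :> Type;
  kcmp : kmor -> kmor -> kmor;            (* kcmp a b = a b  (a after b) *)
  kvtx : kmor;
  kdeg : kmor -> nat -> nat;
  kcmp_assoc : forall a b c, kcmp a (kcmp b c) = kcmp (kcmp a b) c;
  kvtx_l : forall a, kcmp kvtx a = a;
  kvtx_r : forall a, kcmp a kvtx = a;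
  kdeg_supp : forall a i, (k <= i)%nat -> kdeg a i = 0%nat;
  kdeg_vtx : forall i, kdeg kvtx i = 0%nat;
  kdeg_cmp : forall a b i, kdeg (kcmp a b) i = (kdeg a i + kdeg b i)%nat;
  kfact : forall a (m n : nat -> nat),
      (forall i, (k <= i)%nat -> m i = 0%nat /\ n i = 0%nat) ->
      (forall i, kdeg a i = (m i + n i)%nat) ->
      exists eta nu, a = kcmp eta nu /\ (forall i, kdeg eta i = m i) /\
        (forall i, kdeg nu i = n i) /\
        (forall eta' nu', a = kcmp eta' nu' -> (forall i, kdeg eta' i = m i) ->
           (forall i, kdeg nu' i = n i) -> eta' = eta /\ nu' = nu);
  kcountable : exists f : kmor -> nat, forall a b, f a = f b -> a = b
}.

Arguments kcmp {k} _ _ _.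
Arguments kvtx {k} _.
Arguments kdeg {k} _ _ _.

(* Finiteness of Lambda: [enum n] is a duplicate-free list of Lambda^n. *)
Definition is_enum {k} (K : KGraph1 k) (enum : (nat -> nat) -> list (kmor k K)) : Prop :=
  forall n, NoDup (enum n) /\ forall a, In a (enum n) <-> (forall i, kdeg K a i = n i).

Definition is_Rfunctor {k} (K : KGraph1 k) (y : kmor k K -> R) : Prop :=
  (forall a, 0 <= y a) /\ y (kvtx K) = 0 /\
  (forall a b, y (kcmp K a b) = y a + y b).

(* rho(B_{i+1}(y,theta)) = sum_{h in Lambda^{e_{i+1}}} exp(-theta y(h))  (one vertex). *)
Definition rhoB {k} (K : KGraph1 k) (enum : (nat -> nat) -> list (kmor k K))
  (y : kmor k K -> R) (theta : R) (i : nat) : R :=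
  fold_right (fun h acc => exp (- theta * y h) + acc) 0 (enum (ebasis i)).

Fixpoint prod_upto (n : nat) (f : nat -> R) : R :=
  match n with O => 1 | S n' => prod_upto n' f * f n' end.

(* rho(B(y,theta))^{d(lambda)} = prod_i rho(B_i(y,theta))^{d(lambda)_i} *)
Definition rhoB_pow {k} (K : KGraph1 k) enum y theta (a : kmor k K) : R :=
  prod_upto k (fun i => rhoB K enum y theta i ^ kdeg K a i).

Definition wyt {k} (K : KGraph1 k) enum y theta (a : kmor k K) : R :=
  exp (- y a) * Rpower (/ rhoB_pow K enum y theta a) (/ theta).

(* Bratteli diagrams: vertex sets V_n, edge sets E_n (n >= 1, E_{n+1} indexed
   as BE (S n)), edges of E_{n+1} go from V_{n+1} (source) to V_n (range). *)
Record Bratteli : Type := {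
  BV : nat -> Type;
  BE : nat -> Type;
  Bsrc : forall n, BE (S n) -> BV (S n);
  Brng : forall n, BE (S n) -> BV n
}.

(* Finite paths f_1 ... f_n, indexed by length n and final source vertex.
   [fp0 v] is the length-0 path (vertex v in V_0);
   [fpS p e _] appends the edge e in E_{n+1} to p (requires r(e) = s(p)). *)
Inductive fpath (B : Bratteli) : forall n : nat, BV B n -> Type :=
| fp0 : forall v : BV B 0, fpath B 0 v
| fpS : forall n v (p : fpath B n v) (e : BE B (S n)),
    Brng B n e = v -> fpath B (S n) (Bsrc B n e).

Inductive fprefix (B : Bratteli) :
  forall n v m u, fpath B n v -> fpath B m u -> Prop :=
| fpref_refl : forall n v (p : fpath B n v), fprefix B n v n v p p
| fpref_S : forall n v m u (p : fpath B n v) (q : fpath B m u)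
    (e : BE B (S m)) (H : Brng B m e = u),
    fprefix B n v m u p q -> fprefix B n v (S m) (Bsrc B m e) p (fpS B m u q e H).

(* Weight on a Bratteli diagram.  Condition (ii),
   lim_n sup{w(g) : g in F^n} = 0, is written out with epsilon-N
   (the sup is over a finite set of nonnegative reals). *)
Definition is_weight (B : Bratteli) (w : forall n v, fpath B n v -> R) : Prop :=
  (forall n v (p : fpath B n v), 0 <= w n v p) /\
  (forall v : BV B 0, w 0%nat v (fp0 B v) <= 1) /\
  (forall eps, 0 < eps -> exists N : nat, forall n, (N <= n)%nat ->
      forall v (p : fpath B n v), w n v p <= eps) /\
  (forall n v m u (p : fpath B n v) (q : fpath B m u),
      fprefix B n v m u p q -> w m u q <= w n v p).

(* Stationary k-Bratteli diagram of a one-vertex k-graph: V_n = {vertex};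
   E_{m+1} = Lambda^{e_i} with i = (m mod k) + 1, i.e. n = m+1 ≡ i (mod k). *)
Definition BL_E {k} (K : KGraph1 k) (n : nat) : Type :=
  match n with
  | O => Empty_set
  | S m => { a : kmor k K | forall j, kdeg K a j = ebasis (m mod k) j }
  end.

Definition BL {k} (K : KGraph1 k) : Bratteli :=
  {| BV := fun _ => unit; BE := BL_E K;
     Bsrc := fun _ _ => tt; Brng := fun _ _ => tt |}.

Fixpoint fpath_mor {k} (K : KGraph1 k) n v (p : fpath (BL K) n v) : kmor k K :=
  match p with
  | fp0 _ _ => kvtx K
  | fpS _ n' v' p' e _ => kcmp K (fpath_mor K n' v' p') (proj1_sig (e : BL_E K (S n')))
  end.

Definition wyt_path {k} (K : KGraph1 k) enum y theta :
  forall n v, fpath (BL K) n v -> R :=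
  fun n v p => wyt K enum y theta (fpath_mor K n v p).

(* Writing [w(λ) = exp (- Q λ)] with [Q λ = y λ + ln ρ(B)^d(λ) / θ], the
   exponent [Q] is additive on composable morphisms and nonnegative, so [w] is
   at most [1] and decreases along paths.  An edge of degree [e_i] contributes
   at least [ln ρ(B_i) / θ], which is bounded below by a constant [c > 0] by
   (w-I); a path of length [n] thus has weight at most [exp (- n c)]. *)
From Stdlib Require Import Reals Arith Lra Lia.
Open Scope R_scope.

Lemma exp_le_compat x y : x <= y -> exp x <= exp y.
Proof. intros [Hlt | ->]; [left; exact (exp_increasing _ _ Hlt) | lra]. Qed.

Lemma ln_nonneg x : 1 <= x -> 0 <= ln x.
Proof.
  intros [Hlt | <-]; [| rewrite ln_1; lra].
  rewrite <- ln_1; left; apply ln_increasing; lra.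
Qed.

Lemma exp_neg_linear_eventually_le c eps : 0 < c -> 0 < eps ->
  exists N : nat, forall n, (N <= n)%nat -> exp (- (INR n * c)) <= eps.
Proof.
  intros Hc Heps.
  destruct (INR_archimed c (- ln eps) Hc) as [N HN].
  exists N; intros n Hn.
  assert (HNn : INR N * c <= INR n * c)
    by (apply Rmult_le_compat_r; [lra | apply le_INR; exact Hn]).
  rewrite <- (exp_ln eps Heps); apply exp_le_compat; lra.
Qed.

Lemma exists_pos_lower_bound (f : nat -> R) n :
  (forall i, (i < n)%nat -> 0 < f i) ->
  exists c, 0 < c /\ forall i, (i < n)%nat -> c <= f i.
Proof.
  induction n as [| n IHn]; intros Hf.
  - exists 1; split; [lra | intros i Hi; lia].
  - destruct IHn as [c [Hc Hcf]]; [intros i Hi; apply Hf; lia |].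
    exists (Rmin c (f n)); split.
    + apply Rmin_glb_lt; [exact Hc | apply Hf; lia].
    + intros i Hi; destruct (Nat.eq_dec i n) as [-> | Hne].
      * apply Rmin_r.
      * eapply Rle_trans; [apply Rmin_l | apply Hcf; lia].
Qed.

Lemma prod_upto_ext n f g :
  (forall i, (i < n)%nat -> f i = g i) -> prod_upto n f = prod_upto n g.
Proof.
  induction n as [| n IHn]; simpl; intros Hfg; [reflexivity |].
  rewrite IHn, Hfg; [reflexivity | lia | intros i Hi; apply Hfg; lia].
Qed.

Lemma prod_upto_mul n f g :
  prod_upto n (fun i => f i * g i) = prod_upto n f * prod_upto n g.
Proof. induction n as [| n IHn]; simpl; [| rewrite IHn]; ring. Qed.

Lemma prod_upto_1 n : prod_upto n (fun _ => 1) = 1.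
Proof. induction n as [| n IHn]; simpl; [| rewrite IHn]; ring. Qed.

Lemma prod_upto_ge1 n f : (forall i, (i < n)%nat -> 1 <= f i) -> 1 <= prod_upto n f.
Proof.
  induction n as [| n IHn]; simpl; intros Hf; [lra |].
  assert (1 <= prod_upto n f) by (apply IHn; intros i Hi; apply Hf; lia).
  assert (1 <= f n) by (apply Hf; lia).
  nra.
Qed.

Lemma prod_upto_pow_ebasis n f i : (i < n)%nat ->
  prod_upto n (fun j => f j ^ ebasis i j) = f i.
Proof.
  induction n as [| n IHn]; intros Hi; [lia |]; simpl.
  unfold ebasis at 2; destruct (Nat.eqb_spec n i) as [-> | Hne].
  - rewrite (prod_upto_ext _ _ (fun _ => 1)), prod_upto_1; [ring |].
    intros j Hj; unfold ebasis; destruct (Nat.eqb_spec j i); [lia | reflexivity].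
  - rewrite IHn by lia; ring.
Qed.

Section Exponent.
Variables (k : nat) (K : KGraph1 k) (enum : (nat -> nat) -> list (kmor k K))
  (y : kmor k K -> R) (theta : R).

Let rho := rhoB K enum y theta.
Let rho_pow := rhoB_pow K enum y theta.

Lemma rhoB_pow_cmp a b : rho_pow (kcmp K a b) = rho_pow a * rho_pow b.
Proof.
  unfold rho_pow, rhoB_pow; rewrite <- prod_upto_mul.
  apply prod_upto_ext; intros i _; rewrite kdeg_cmp; apply pow_add.
Qed.

Lemma rhoB_pow_vtx : rho_pow (kvtx K) = 1.
Proof.
  unfold rho_pow, rhoB_pow; rewrite <- (prod_upto_1 k).
  apply prod_upto_ext; intros i _; rewrite kdeg_vtx; reflexivity.
Qed.

Lemma rhoB_pow_ebasis a i : (i < k)%nat ->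
  (forall j, kdeg K a j = ebasis i j) -> rho_pow a = rho i.
Proof.
  intros Hi Ha; unfold rho_pow, rhoB_pow.
  rewrite (prod_upto_ext _ _ (fun j => rho j ^ ebasis i j)).
  - apply prod_upto_pow_ebasis; exact Hi.
  - intros j _; rewrite Ha; reflexivity.
Qed.

Hypothesis rho_gt1 : forall i, (i < k)%nat -> 1 < rho i.

Lemma rhoB_pow_ge1 a : 1 <= rho_pow a.
Proof.
  apply prod_upto_ge1; intros i Hi.
  apply pow_R1_Rle; left; apply rho_gt1; exact Hi.
Qed.

Definition wyt_exponent a := y a + ln (rho_pow a) / theta.

Lemma wyt_exp a : wyt K enum y theta a = exp (- wyt_exponent a).
Proof.
  unfold wyt, wyt_exponent, Rpower; fold (rho_pow a).
  pose proof (rhoB_pow_ge1 a).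
  rewrite ln_Rinv, <- exp_plus by lra.
  f_equal; unfold Rdiv; ring.
Qed.

Hypothesis y_functor : is_Rfunctor K y.
Hypothesis theta_pos : 0 < theta.

Lemma wyt_exponent_ge0 a : 0 <= wyt_exponent a.
Proof.
  destruct y_functor as [y_ge0 _].
  pose proof (y_ge0 a); pose proof (ln_nonneg _ (rhoB_pow_ge1 a)).
  unfold wyt_exponent, Rdiv.
  assert (0 <= ln (rho_pow a) * / theta)
    by (apply Rmult_le_pos; [| left; apply Rinv_0_lt_compat]; lra).
  lra.
Qed.

Lemma wyt_exponent_cmp a b :
  wyt_exponent (kcmp K a b) = wyt_exponent a + wyt_exponent b.
Proof.
  destruct y_functor as [_ [_ y_cmp]].
  pose proof (rhoB_pow_ge1 a); pose proof (rhoB_pow_ge1 b).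
  unfold wyt_exponent; rewrite y_cmp, rhoB_pow_cmp, ln_mult by lra.
  unfold Rdiv; ring.
Qed.

Lemma wyt_exponent_vtx : wyt_exponent (kvtx K) = 0.
Proof.
  destruct y_functor as [_ [y_vtx _]].
  unfold wyt_exponent; rewrite y_vtx, rhoB_pow_vtx, ln_1; unfold Rdiv; ring.
Qed.

Hypothesis k_pos : (1 <= k)%nat.

Lemma wyt_exponent_edge_lower_bound :
  exists c, 0 < c /\ forall m (e : BL_E K (S m)), c <= wyt_exponent (proj1_sig e).
Proof.
  destruct (exists_pos_lower_bound (fun i => ln (rho i) / theta) k) as [c [Hc Hcb]].
  { intros i Hi; apply Rdiv_lt_0_compat; [| exact theta_pos].
    rewrite <- ln_1; apply ln_increasing; [lra | apply rho_gt1; exact Hi]. }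
  exists c; split; [exact Hc |].
  intros m [a Ha]; simpl.
  assert (Hi : (m mod k < k)%nat) by (apply Nat.mod_upper_bound; lia).
  destruct y_functor as [y_ge0 _]; pose proof (y_ge0 a).
  unfold wyt_exponent; rewrite (rhoB_pow_ebasis a (m mod k) Hi Ha).
  pose proof (Hcb _ Hi); lra.
Qed.

Lemma wyt_exponent_path c :
  (forall m (e : BL_E K (S m)), c <= wyt_exponent (proj1_sig e)) ->
  forall n v (p : fpath (BL K) n v), INR n * c <= wyt_exponent (fpath_mor K n v p).
Proof.
  intros Hc n v p; induction p as [v | n v p IHp e He]; cbn [fpath_mor].
  - rewrite wyt_exponent_vtx; simpl INR; lra.
  - rewrite wyt_exponent_cmp, S_INR.
    pose proof (Hc n e); lra.
Qed.

Lemma wyt_path_prefix n v m u (p : fpath (BL K) n v) (q : fpath (BL K) m u) :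
  fprefix (BL K) n v m u p q ->
  wyt_path K enum y theta m u q <= wyt_path K enum y theta n v p.
Proof.
  intros Hpq; induction Hpq as [| n v m u p q e He Hpq IH]; [lra |].
  eapply Rle_trans; [| exact IH].
  unfold wyt_path; simpl; rewrite !wyt_exp, wyt_exponent_cmp.
  apply exp_le_compat.
  pose proof (wyt_exponent_ge0 (proj1_sig (e : BL_E K (S m)))); lra.
Qed.

End Exponent.

Theorem proposition6p7 (k : nat) (K : KGraph1 k)
  (enum : (nat -> nat) -> list (kmor k K)) (y : kmor k K -> R) (theta : R) :
  (1 <= k)%nat ->
  is_enum K enum ->
  is_Rfunctor K y ->
  0 < theta ->
  (forall i, (i < k)%nat -> 1 < rhoB K enum y theta i) ->
  is_weight (BL K) (wyt_path K enum y theta).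
Proof.
  intros k_pos _ y_functor theta_pos rho_gt1.
  unfold wyt_path; repeat split.
  - intros n v p; rewrite wyt_exp by assumption; left; apply exp_pos.
  - intros v; simpl; rewrite wyt_exp, wyt_exponent_vtx, Ropp_0, exp_0 by assumption.
    lra.
  - intros eps Heps.
    destruct (wyt_exponent_edge_lower_bound k K enum y theta rho_gt1 y_functor
                theta_pos k_pos) as [c [Hc Hedge]].
    destruct (exp_neg_linear_eventually_le c eps Hc Heps) as [N HN].
    exists N; intros n Hn v p.
    rewrite wyt_exp by assumption.
    eapply Rle_trans; [| exact (HN n Hn)].
    apply exp_le_compat, Ropp_le_contravar.
    apply (wyt_exponent_path k K enum y theta rho_gt1 y_functor c Hedge).
  - intros n v m u p q; apply wyt_path_prefix; assumption.
Qed.
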